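(* Every consistent theory $x$ can be extended to a maximal consistent theory $y\supseteq x$.
   Context: Fix a finite set $A$ of agents and a countable set $P$ of propositional variables. The language $\mathcal{L}_{CoRGAL}$ is given by $\varphi ::= p \mid \neg\varphi \mid (\varphi\wedge\varphi) \mid K_a\varphi \mid [\varphi]\varphi \mid [G,\varphi]\varphi \mid [\langle G\rangle]\varphi$ with $p\in P$, $a\in A$, $G\subseteq A$. $\mathcal{L}_{EL}$ is the fragment built only from $p,\neg,\wedge,K_a$. Duals: $\langle\psi\rangle\varphi:=\neg[\psi]\neg\varphi$, $\langle G,\psi\rangle\varphi:=\neg[G,\psi]\neg\varphi$. $\mathcal{L}^G_{EL}$ is the set of formulas $\bigwedge_{i\in G}K_i\varphi_i$ with $\varphi_i\in\mathcal{L}_{EL}$; $\psi_G$ ranges over it. Necessity forms: $\eta ::= \sharp \mid \varphi\to\eta(\sharp)\mid K_a\eta(\sharp)\mid[\varphi]\eta(\sharp)$; $\sharp$ occurs exactly once and $\eta(\varphi)$ is the result of replacing $\sharp$ by $\varphi$. $\mathbf{CoRGAL}$ is the smallest set of formulas containing all instances of: (A0) propositional tautologies; (A1) $K_a(\varphi\to\psi)\to(K_a\varphi\to K_a\psi)$; (A2) $K_a\varphi\to\varphi$; (A3) $K_a\varphi\to K_aK_a\varphi$; (A4) $\neg K_a\varphi\to K_a\neg K_a\varphi$; (A5) $[\varphi]p\leftrightarrow(\varphi\to p)$; (A6) $[\varphi]\neg\psi\leftrightarrow(\varphi\to\neg[\varphi]\psi)$; (A7) $[\varphi](\psi\wedge\chi)\leftrightarrow([\varphi]\psi\wedge[\varphi]\chi)$;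 (A8) $[\varphi]K_a\psi\leftrightarrow(\varphi\to K_a[\varphi]\psi)$; (A9) $[\varphi][\psi]\chi\leftrightarrow[\varphi\wedge[\varphi]\psi]\chi$; (A10) $[G,\chi]\varphi\to\chi\wedge[\psi_G\wedge\chi]\varphi$ for any $\psi_G$; (A11) $[\langle G\rangle]\varphi\to\langle A\setminus G,\psi_G\rangle\varphi$ for any $\psi_G$; and closed under: (R0) modus ponens; (R1) from $\varphi$ infer $K_a\varphi$; (R2) from $\varphi$ infer $[\psi]\varphi$; (R3) from $\varphi$ infer $[G,\chi]\varphi$; (R4) from $\varphi$ infer $[\langle G\rangle]\varphi$; (R5) from $\eta(\chi\wedge[\psi_G\wedge\chi]\varphi)$ for all $\psi_G$ infer $\eta([G,\chi]\varphi)$; (R6) from $\eta(\langle A\setminus G,\psi_G\rangle\varphi)$ for all $\psi_G$ infer $\eta([\langle G\rangle]\varphi)$. A theory is a set of formulas containing $\mathbf{CoRGAL}$ and closed under (R0), (R5), (R6). A theory $x$ is consistent iff $\bot\notin x$, and maximal iff for every formula $\varphi$, $\varphi\in x$ or $\neg\varphi\in x$. *)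

From mathcomp Require Import all_boot.
Set Implicit Arguments.
Unset Strict Implicit.
Unset Printing Implicit Defensive.

Section CoRGAL.
Variable Agent : finType.

Inductive form : Type :=
| Var : nat -> form
| Neg : form -> form
| And : form -> form -> form
| K : Agent -> form -> form
| Ann : form -> form -> form                 (* [phi]psi *)
| GAnn : {set Agent} -> form -> form -> form (* [G,chi]phi *)
| CAnn : {set Agent} -> form -> form.        (* [<G>]phi *)

Definition Imp (a b : form) : form := Neg (And a (Neg b)).
Definition Iff (a b : form) : form := And (Imp a b) (Imp b a).
Definition Top : form := Imp (Var 0) (Var 0).
Definition Bot : form := Neg Top.
Definition DAnn (a b : form) : form := Neg (Ann a (Neg b)).
Definition DGAnn (G : {set Agent}) (c a : form) : form := Neg (GAnn G c (Neg a)).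

Fixpoint isEL (f : form) : bool :=
  match f with
  | Var _ => true
  | Neg a => isEL a
  | And a b => isEL a && isEL b
  | K _ a => isEL a
  | _ => false
  end.

Definition bigAnd (l : seq form) : form :=
  match l with
  | [::] => Top
  | a :: l' => foldl And a l'
  end.
Definition psiG (G : {set Agent}) (phi : Agent -> form) : form :=
  bigAnd [seq K i (phi i) | i <- enum G].
Definition ELfam (phi : Agent -> form) : Prop := forall i, isEL (phi i).

Inductive nform : Type :=
| NHole : nform
| NImp : form -> nform -> nform
| NK : Agent -> nform -> nform
| NAnn : form -> nform -> nform.

Fixpoint nfill (e : nform) (f : form) : form :=
  match e with
  | NHole => f
  | NImp a e' => Imp a (nfill e' f)
  | NK i e' => K i (nfill e' f)
  | NAnn a e' => Ann a (nfill e' f)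
  end.

(* propositional tautology instances: true under every boolean assignment to
   the maximal non-boolean subformulas (atoms and modal/announcement formulas) *)
Fixpoint peval (v : form -> bool) (f : form) : bool :=
  match f with
  | Neg a => ~~ peval v a
  | And a b => peval v a && peval v b
  | _ => v f
  end.
Definition ptaut (f : form) : Prop := forall v, peval v f = true.

Inductive CoRGAL : form -> Prop :=
| A0 f : ptaut f -> CoRGAL f
| A1 a f g : CoRGAL (Imp (K a (Imp f g)) (Imp (K a f) (K a g)))
| A2 a f : CoRGAL (Imp (K a f) f)
| A3 a f : CoRGAL (Imp (K a f) (K a (K a f)))
| A4 a f : CoRGAL (Imp (Neg (K a f)) (K a (Neg (K a f))))
| A5 f p : CoRGAL (Iff (Ann f (Var p)) (Imp f (Var p)))
| A6 f g : CoRGAL (Iff (Ann f (Neg g)) (Imp f (Neg (Ann f g))))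
| A7 f g h : CoRGAL (Iff (Ann f (And g h)) (And (Ann f g) (Ann f h)))
| A8 f a g : CoRGAL (Iff (Ann f (K a g)) (Imp f (K a (Ann f g))))
| A9 f g h : CoRGAL (Iff (Ann f (Ann g h)) (Ann (And f (Ann f g)) h))
| A10 G c f phi : ELfam phi ->
    CoRGAL (Imp (GAnn G c f) (And c (Ann (And (psiG G phi) c) f)))
| A11 G f phi : ELfam phi ->
    CoRGAL (Imp (CAnn G f) (DGAnn (~: G) (psiG G phi) f))
| R0 f g : CoRGAL (Imp f g) -> CoRGAL f -> CoRGAL g
| R1 a f : CoRGAL f -> CoRGAL (K a f)
| R2 g f : CoRGAL f -> CoRGAL (Ann g f)
| R3 G c f : CoRGAL f -> CoRGAL (GAnn G c f)
| R4 G f : CoRGAL f -> CoRGAL (CAnn G f)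
| R5 e G c f :
    (forall phi, ELfam phi -> CoRGAL (nfill e (And c (Ann (And (psiG G phi) c) f)))) ->
    CoRGAL (nfill e (GAnn G c f))
| R6 e G f :
    (forall phi, ELfam phi -> CoRGAL (nfill e (DGAnn (~: G) (psiG G phi) f))) ->
    CoRGAL (nfill e (CAnn G f)).

Definition theory (x : form -> Prop) : Prop :=
  (forall f, CoRGAL f -> x f) /\
  (forall f g, x (Imp f g) -> x f -> x g) /\
  (forall e G c f,
     (forall phi, ELfam phi -> x (nfill e (And c (Ann (And (psiG G phi) c) f)))) ->
     x (nfill e (GAnn G c f))) /\
  (forall e G f,
     (forall phi, ELfam phi -> x (nfill e (DGAnn (~: G) (psiG G phi) f))) ->
     x (nfill e (CAnn G f))).

Definition consistent (x : form -> Prop) : Prop := ~ x Bot.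
Definition maximal (x : form -> Prop) : Prop := forall f, x f \/ x (Neg f).

End CoRGAL.

(* Enumerate all formulas and all instances of the
   infinitary rules R5 and R6, and extend x along a chain of consistent
   theories: for a formula f add f or ~f; for a rule instance add its
   conclusion or the negation of one of its premises. One of these choices is
   always consistent, for otherwise every premise is in the theory, hence so is
   the conclusion, and adding the conclusion was inconsistent. Each extension by
   a single formula a is again a theory, namely {f | a -> f in x}, because the
   necessity forms are closed under prefixing a -> _. The union of the chain
   is consistent and maximal, and it is closed under R5 and R6: an instance
   whose premises all lie in the union cannot have had a premise negated. *)

From HB Require Import structures.
From Stdlib Require Import ClassicalEpsilon Classical.
From mathcomp Require Import all_boot.

Set Implicit Arguments.
Unset Strict Implicit.
Unset Printing Implicit Defensive.

Section Countability.
Variable Agent : finType.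
Notation F := (form Agent).
Notation NF := (nform Agent).
Notation tree := (GenTree.tree ((nat + Agent) + {set Agent})).

Fixpoint tree_of_form (f : F) : tree :=
  match f with
  | Var n => GenTree.Node 0 [:: GenTree.Leaf (inl (inl n))]
  | Neg a => GenTree.Node 1 [:: tree_of_form a]
  | And a b => GenTree.Node 2 [:: tree_of_form a; tree_of_form b]
  | K i a => GenTree.Node 3 [:: GenTree.Leaf (inl (inr i)); tree_of_form a]
  | Ann a b => GenTree.Node 4 [:: tree_of_form a; tree_of_form b]
  | GAnn G c a => GenTree.Node 5 [:: GenTree.Leaf (inr G); tree_of_form c; tree_of_form a]
  | CAnn G a => GenTree.Node 6 [:: GenTree.Leaf (inr G); tree_of_form a]
  end.

Fixpoint form_of_tree (t : tree) : option F :=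
  match t with
  | GenTree.Node 0 [:: GenTree.Leaf (inl (inl n))] => Some (Var _ n)
  | GenTree.Node 1 [:: a] => omap (@Neg _) (form_of_tree a)
  | GenTree.Node 2 [:: a; b] =>
      obind (fun a' => omap (And a') (form_of_tree b)) (form_of_tree a)
  | GenTree.Node 3 [:: GenTree.Leaf (inl (inr i)); a] => omap (K i) (form_of_tree a)
  | GenTree.Node 4 [:: a; b] =>
      obind (fun a' => omap (Ann a') (form_of_tree b)) (form_of_tree a)
  | GenTree.Node 5 [:: GenTree.Leaf (inr G); c; a] =>
      obind (fun c' => omap (GAnn G c') (form_of_tree a)) (form_of_tree c)
  | GenTree.Node 6 [:: GenTree.Leaf (inr G); a] => omap (CAnn G) (form_of_tree a)
  | _ => None
  end.

Lemma tree_of_formK : pcancel tree_of_form form_of_tree.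
Proof. by elim=> //= [a -> | a -> b -> | i a -> | a -> b -> | G c -> a -> | G a ->]. Qed.

HB.instance Definition _ := Countable.copy F (pcan_type tree_of_formK).

Fixpoint seq_of_nform (e : NF) : seq ((F + Agent) + F) :=
  match e with
  | NHole => [::]
  | NImp a e' => inl (inl a) :: seq_of_nform e'
  | NK i e' => inl (inr i) :: seq_of_nform e'
  | NAnn a e' => inr a :: seq_of_nform e'
  end.

Fixpoint nform_of_seq (s : seq ((F + Agent) + F)) : NF :=
  match s with
  | [::] => NHole _
  | inl (inl a) :: s' => NImp a (nform_of_seq s')
  | inl (inr i) :: s' => NK i (nform_of_seq s')
  | inr a :: s' => NAnn a (nform_of_seq s')
  end.

Lemma seq_of_nformK : cancel seq_of_nform nform_of_seq.
Proof. by elim=> //= [a e -> | i e -> | a e ->]. Qed.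

HB.instance Definition _ := Countable.copy NF (can_type seq_of_nformK).

Inductive task : Type :=
| Decide of F
| WitnessGAnn of NF & {set Agent} & F & F
| WitnessCAnn of NF & {set Agent} & F.

Definition code_of_task (t : task) :
    F + (NF * {set Agent} * F * F) + (NF * {set Agent} * F) :=
  match t with
  | Decide f => inl (inl f)
  | WitnessGAnn e G c f => inl (inr (e, G, c, f))
  | WitnessCAnn e G f => inr (e, G, f)
  end.

Definition task_of_code (u : F + (NF * {set Agent} * F * F) + (NF * {set Agent} * F)) :
    task :=
  match u with
  | inl (inl f) => Decide f
  | inl (inr (e, G, c, f)) => WitnessGAnn e G c f
  | inr (e, G, f) => WitnessCAnn e G f
  end.

Lemma code_of_taskK : cancel code_of_task task_of_code.
Proof. by case. Qed.

HB.instance Definition _ := Countable.copy task (can_type code_of_taskK).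

End Countability.

Section Theories.
Variable Agent : finType.
Notation F := (form Agent).
Notation NF := (nform Agent).

Ltac prop_taut :=
  let v := fresh "v" in
  move=> v; rewrite /Imp ?/Bot ?/Top /=;
  repeat match goal with |- context [peval v ?a] => case: (peval v a) end;
  by case: (v (Var _ 0)).

Lemma ptaut_K (a f : F) : ptaut (Imp f (Imp a f)). Proof. prop_taut. Qed.
Lemma ptaut_S (a f g : F) : ptaut (Imp (Imp a (Imp f g)) (Imp (Imp a f) (Imp a g))).
Proof. prop_taut. Qed.
Lemma ptaut_id (a : F) : ptaut (Imp a a). Proof. prop_taut. Qed.
Lemma ptaut_notnot (f : F) : ptaut (Imp (Imp (Neg f) (Bot _)) f). Proof. prop_taut. Qed.
Lemma ptaut_contra (f : F) : ptaut (Imp f (Imp (Neg f) (Bot _))). Proof. prop_taut. Qed.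

Section Theory.
Variable x : F -> Prop.
Hypothesis x_theory : theory x.

Lemma theory_CoRGAL f : CoRGAL f -> x f.
Proof. by case: x_theory => h _; apply: h. Qed.

Lemma theory_MP f g : x (Imp f g) -> x f -> x g.
Proof. by case: x_theory => _ [h _]; apply: h. Qed.

Lemma theory_R5 e G c f :
  (forall phi, ELfam phi -> x (nfill e (And c (Ann (And (psiG G phi) c) f)))) ->
  x (nfill e (GAnn G c f)).
Proof. by case: x_theory => _ [_ [h _]]; apply: h. Qed.

Lemma theory_R6 e G f :
  (forall phi, ELfam phi -> x (nfill e (DGAnn (~: G) (psiG G phi) f))) ->
  x (nfill e (CAnn G f)).
Proof. by case: x_theory => _ [_ [_ h]]; apply: h. Qed.

Lemma theory_ptaut f g : ptaut (Imp f g) -> x f -> x g.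
Proof. by move=> fg; apply: theory_MP; apply/theory_CoRGAL/A0. Qed.

Lemma theory_contra f : x f -> x (Neg f) -> x (Bot _).
Proof. by move=> /(theory_ptaut (ptaut_contra f)); apply: theory_MP. Qed.

Definition assume (a : F) : F -> Prop := fun f => x (Imp a f).

Lemma assume_theory a : theory (assume a).
Proof.
split; [|split; [|split]].
- by move=> f /theory_CoRGAL; apply: theory_ptaut (ptaut_K a f).
- by move=> f g /(theory_ptaut (ptaut_S a f g)); apply: theory_MP.
- by move=> e G c f; exact: (@theory_R5 (NImp a e)).
- by move=> e G f; exact: (@theory_R6 (NImp a e)).
Qed.

Lemma sub_assume a f : x f -> assume a f.
Proof. exact: theory_ptaut (ptaut_K a f). Qed.

Lemma assume_self a : assume a a.
Proof. exact/theory_CoRGAL/A0/ptaut_id. Qed.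

End Theory.

Definition witnessed (y : F -> Prop) (t : F) (I : Type) (P : I -> Prop) (W : I -> F) :=
  y t \/ exists2 i, P i & y (Neg (W i)).

Lemma witnessed_mono x y t I (P : I -> Prop) (W : I -> F) :
  (forall f, x f -> y f) -> witnessed x t P W -> witnessed y t P W.
Proof. by move=> xy [/xy | [i Pi /xy]]; [left | right; exists i]. Qed.

Lemma witness_extension x t I (P : I -> Prop) (W : I -> F) :
  theory x -> consistent x -> ((forall i, P i -> x (W i)) -> x t) ->
  exists y, [/\ theory y, consistent y, (forall f, x f -> y f) & witnessed y t P W].
Proof.
move=> xT xC closed.
have [tI | tC] := classic (x (Imp t (Bot _))); last first.
  exists (assume x t); split; [exact: assume_theory | exact: tC | exact: sub_assume |].
  by left; apply: assume_self.
have [[i Pi WC] | noW] := classic (exists2 i, P i & ~ x (Imp (Neg (W i)) (Bot _))).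
  exists (assume x (Neg (W i))); split; [exact: assume_theory | exact: WC | exact: sub_assume |].
  by right; exists i; last exact: assume_self.
case: xC; apply: theory_MP tI (closed _) => // i Pi.
apply: theory_ptaut (ptaut_notnot _) _ => //.
by apply: NNPP => WC; apply: noW; exists i.
Qed.

Definition fulfils (y : F -> Prop) (t : task Agent) : Prop :=
  match t with
  | Decide f => y f \/ y (Neg f)
  | WitnessGAnn e G c f =>
      witnessed y (nfill e (GAnn G c f)) (@ELfam _)
        (fun phi => nfill e (And c (Ann (And (psiG G phi) c) f)))
  | WitnessCAnn e G f =>
      witnessed y (nfill e (CAnn G f)) (@ELfam _)
        (fun phi => nfill e (DGAnn (~: G) (psiG G phi) f))
  end.

Lemma fulfils_mono x y t : (forall f, x f -> y f) -> fulfils x t -> fulfils y t.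
Proof.
move=> xy; case: t => [f /= [/xy | /xy] | e G c f | e G f];
  by [left | right | apply: witnessed_mono].
Qed.

Lemma fulfilling_extension x t : theory x -> consistent x ->
  exists y, [/\ theory y, consistent y, (forall f, x f -> y f) & fulfils y t].
Proof.
move=> xT xC; case: t => [f | e G c f | e G f] /=.
- (* deciding [f] is witnessing the rule whose only premise and conclusion is [f] *)
  have [|y [yT yC xy [yf | [_ _ ynf]]]] :=
    @witness_extension x f unit (fun _ => True) (fun _ => f) xT xC.
  + by apply.
  + by exists y; split => //; left.
  + by exists y; split => //; right.
- exact: witness_extension xT xC (@theory_R5 _ xT e G c f).
- exact: witness_extension xT xC (@theory_R6 _ xT e G f).
Qed.

Section Chain.
Variable c : nat -> F -> Prop.
Hypothesis c_theory : forall n, theory (c n).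
Hypothesis c_consistent : forall n, consistent (c n).
Hypothesis c_succ : forall n f, c n f -> c n.+1 f.
Hypothesis c_fulfils : forall t, exists n, fulfils (c n) t.

Definition union : F -> Prop := fun f => exists n, c n f.

Lemma chain_mono n m f : n <= m -> c n f -> c m f.
Proof. by move=> /subnK <-; elim: (m - n) => //= k IH /IH /c_succ. Qed.

Lemma union_common f g : union f -> union g -> exists n, c n f /\ c n g.
Proof.
move=> [n cf] [m cg]; exists (maxn n m).
by split; [apply: chain_mono cf; apply: leq_maxl | apply: chain_mono cg; apply: leq_maxr].
Qed.

Lemma union_consistent : consistent union.
Proof. by case=> n; apply: c_consistent. Qed.

Lemma union_witnessed t I (P : I -> Prop) (W : I -> F) :
  witnessed union t P W -> (forall i, P i -> union (W i)) -> union t.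
Proof.
case=> [// | [i Pi nW]] allW; case: (union_common (allW i Pi) nW) => n [cW cnW].
by case: (c_consistent (theory_contra (c_theory n) cW cnW)).
Qed.

Lemma union_fulfils t : fulfils union t.
Proof. by case: (c_fulfils t) => n; apply: fulfils_mono => f; exists n. Qed.

Lemma union_theory : theory union.
Proof.
split; [|split; [|split]].
- by move=> f /(theory_CoRGAL (c_theory 0)); exists 0.
- move=> f g fg /(union_common fg) [n [cfg cf]].
  by exists n; apply: theory_MP cfg cf.
- by move=> e G d f; apply/union_witnessed/(union_fulfils (WitnessGAnn e G d f)).
- by move=> e G f; apply/union_witnessed/(union_fulfils (WitnessCAnn e G f)).
Qed.

Lemma union_maximal : maximal union.
Proof. by move=> f; apply: (union_fulfils (Decide f)). Qed.

End Chain.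

Definition fulfil (x : F -> Prop) (t : task Agent) : F -> Prop :=
  epsilon (inhabits x)
    (fun y => [/\ theory y, consistent y, (forall f, x f -> y f) & fulfils y t]).

Lemma fulfilP x t : theory x -> consistent x ->
  [/\ theory (fulfil x t), consistent (fulfil x t),
      (forall f, x f -> fulfil x t f) & fulfils (fulfil x t) t].
Proof. move=> xT xC; exact: (epsilon_spec _ _ (fulfilling_extension t xT xC)). Qed.

Fixpoint stage (x : F -> Prop) (n : nat) : F -> Prop :=
  match n with
  | 0 => x
  | n'.+1 => if @unpickle (task Agent) n' is Some t then fulfil (stage x n') t
             else stage x n'
  end.

Section Lindenbaum.
Variable x : F -> Prop.
Hypothesis x_theory : theory x.
Hypothesis x_consistent : consistent x.

Lemma stage_theory_consistent n : theory (stage x n) /\ consistent (stage x n).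
Proof.
elim: n => [//|n [nT nC] /=].
by case: unpickle => [t|//]; case: (fulfilP t nT nC).
Qed.

Lemma stage_succ n f : stage x n f -> stage x n.+1 f.
Proof.
rewrite /=; case: unpickle => [t|//]; case: (stage_theory_consistent n) => nT nC.
by case: (fulfilP t nT nC) => _ _ + _; apply.
Qed.

Lemma stage_fulfils t : fulfils (stage x (pickle t).+1) t.
Proof.
rewrite /= pickleK.
by case: (stage_theory_consistent (pickle t)) => nT nC; case: (fulfilP t nT nC).
Qed.

End Lindenbaum.
End Theories.

Theorem mainTheorem12 (Agent : finType) (x : form Agent -> Prop) :
  theory x -> consistent x ->
  exists y : form Agent -> Prop,
    (forall f, x f -> y f) /\ theory y /\ consistent y /\ maximal y.
Proof.
move=> xT xC.
have stageT n := proj1 (stage_theory_consistent xT xC n).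
have stageC n := proj2 (stage_theory_consistent xT xC n).
have stageF t : exists n, fulfils (stage x n) t by exists (pickle t).+1; apply: stage_fulfils.
exists (union (stage x)); split; first by move=> f xf; exists 0.
split; first exact: union_theory stageT stageC (stage_succ xT xC) stageF.
split; first exact: union_consistent.
exact: union_maximal stageF.
Qed.
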